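(* For $n\ge2$ and $1\le\ell\le n-1$, let $t_{n,\ell}$ be the number of permutations $\sigma$ of $\{1,\dots,n\}$ avoiding both $1243$ and $1324$ such that $\sigma^{-1}(n)-\sigma^{-1}(1)=1$ (i.e., $1$ is immediately to the left of $n$) and $\sigma(1)=\ell$. Then for $n\ge3$, \[ t_{n,1}=t_{n,2}=2^{n-3}\quad\text{and}\quad t_{n,n-2}=t_{n,n-1}=\sum_{\ell=1}^{n-2}t_{n-1,\ell}. \]
   Context: A permutation avoids a pattern $p$ if no subsequence of its one-line notation is order-isomorphic to $p$. *)

From mathcomp Require Import all_boot all_fingroup.
From mathcomp Require Import perm.
Set Implicit Arguments. Unset Strict Implicit. Unset Printing Implicit Defensive.

(* One-line notation of a permutation of {1..n}, represented as s : {perm 'I_n}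
   acting on {0..n-1}; the value at position i (1-based i+1) is (s i).+1. *)
Definition oneline (n : nat) (s : {perm 'I_n}) : seq nat :=
  [seq (s i).+1 | i <- enum 'I_n].

Definition contains (w p : seq nat) : bool :=
  [exists m : (size w).-tuple bool,
    (size (mask m w) == size p) &&
    [forall a : 'I_(size p), forall b : 'I_(size p),
      (nth 0 (mask m w) a < nth 0 (mask m w) b) == (nth 0 p a < nth 0 p b)]].

Definition avoids (w p : seq nat) : bool := ~~ contains w p.

Definition Tset (n l : nat) : {set {perm 'I_n}} :=
  [set s : {perm 'I_n} |
     avoids (oneline s) [:: 1; 2; 4; 3] &&
     avoids (oneline s) [:: 1; 3; 2; 4] &&
     (index n (oneline s) == (index 1 (oneline s)).+1) &&
     (head 0 (oneline s) == l)].

Definition t (n l : nat) : nat := #|Tset n l|.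

(* Both forbidden patterns begin with their minimum: 1243 = 1 (+) 132 and
   1324 = 1 (+) 213.  Hence a permutation 1 n w, resp. 2 u 1 n v, avoids them
   iff w, resp. u n v, avoids 132 and 213.  Deleting the first entry of a
   {132, 213}-avoider and standardising is two-to-one onto the avoiders that
   are one entry shorter, because that first entry is either the maximum or
   immediately followed by its successor; so there are 2^(m-1) avoiders of
   length m.  Finally, a first entry l >= n - 2 has fewer than three larger
   values and so can never play the role of the 1: deleting it and
   standardising is a bijection onto the permutations counted by t(n-1, l'),
   1 <= l' <= n - 2. *)

From mathcomp Require Import all_boot all_fingroup zify.
Set Implicit Arguments. Unset Strict Implicit. Unset Printing Implicit Defensive.

Lemma cons_subseq_cat (x : nat) s u v :
  x \notin u -> subseq (x :: s) (u ++ x :: v) = subseq s v.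
Proof.
elim: u => [|y u IHu] /=; rewrite ?eqxx // inE negb_or eq_sym.
by case/andP => /negbTE -> /IHu.
Qed.

Lemma rem_cat_notin (x : nat) u v : x \notin u -> rem x (u ++ x :: v) = u ++ v.
Proof.
elim: u => [|y u IHu] /=; rewrite ?eqxx // inE negb_or eq_sym.
by case/andP => /negbTE -> /IHu ->.
Qed.

Definition ins_before (x y : nat) (s : seq nat) :=
  take (index x s) s ++ y :: drop (index x s) s.

Lemma ins_before_cat x y u v :
  x \notin u -> ins_before x y (u ++ x :: v) = u ++ y :: x :: v.
Proof.
move=> x_u; rewrite /ins_before index_cat (negbTE x_u) /= eqxx addn0.
by rewrite take_size_cat // drop_size_cat.
Qed.

Lemma index_cat_adjacent (T : eqType) (x y : T) u v : x \notin u -> y \notin x :: u ->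
  index y (u ++ x :: y :: v) = (index x (u ++ x :: y :: v)).+1.
Proof.
rewrite inE negb_or => x_u /andP [y_x y_u].
by rewrite !index_cat (negbTE x_u) (negbTE y_u) /= !eqxx eq_sym (negbTE y_x) addn0 addn1.
Qed.

Lemma index_succ_cat (T : eqType) (x y : T) s :
  y \in s -> index y s = (index x s).+1 ->
  exists u v, [/\ s = u ++ x :: y :: v, x \notin u & y \notin u].
Proof.
move=> y_s idx; have x_s : x \in s.
  by rewrite -index_mem; have := index_mem y s; rewrite y_s idx => /ltnW.
exists (take (index x s) s), (drop (index x s).+2 s); split.
- by rewrite -{1}(cat_take_drop (index x s) s) drop_index // -idx drop_index // idx.
- by rewrite in_take // ltnn.
- by rewrite in_take // idx ltnNge leqnSn.
Qed.

Lemma count_le_inj (T1 T2 : eqType) (a1 : pred T1) (a2 : pred T2) s1 s2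
    (f : T1 -> T2) (g : T2 -> T1) :
  uniq s1 -> {in s1, forall x, a1 x -> [/\ f x \in s2, a2 (f x) & g (f x) = x]} ->
  count a1 s1 <= count a2 s2.
Proof.
move=> uniq_s1 f_ok; rewrite -!size_filter -(size_map f) uniq_leq_size //.
  rewrite map_inj_in_uniq ?filter_uniq // => x y.
  rewrite !mem_filter => /andP [ax xs] /andP [ay ys] fxy.
  by case: (f_ok x xs ax) => _ _ <-; case: (f_ok y ys ay) => _ _ <-; rewrite fxy.
move=> y /mapP [x]; rewrite mem_filter => /andP [ax xs] ->.
by case: (f_ok x xs ax) => fx_s2 a2fx _; rewrite mem_filter a2fx.
Qed.

Lemma count_bij (T1 T2 : eqType) (a1 : pred T1) (a2 : pred T2) s1 s2
    (f : T1 -> T2) (g : T2 -> T1) : uniq s1 -> uniq s2 ->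
  {in s1, forall x, a1 x -> [/\ f x \in s2, a2 (f x) & g (f x) = x]} ->
  {in s2, forall y, a2 y -> [/\ g y \in s1, a1 (g y) & f (g y) = y]} ->
  count a1 s1 = count a2 s2.
Proof.
move=> uniq_s1 uniq_s2 fK gK.
by apply/eqP; rewrite eqn_leq (count_le_inj uniq_s1 fK) (count_le_inj uniq_s2 gK).
Qed.

Lemma ltn_bump2 x : {mono bump x : a b / a < b}.
Proof. by move=> a b; rewrite /bump; case: (leqP x a); case: (leqP x b) => /=; lia. Qed.

Lemma bump_notin x s : x \notin map (bump x) s.
Proof. by apply/mapP => -[y _ /eqP]; rewrite (negbTE (neq_bump x y)). Qed.

Lemma perm_bump_iota a k x : a <= x <= a + k ->
  perm_eq (x :: map (bump x) (iota a k)) (iota a k.+1).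
Proof.
move=> x_range; apply: uniq_perm => [|| y]; rewrite ?iota_uniq //.
  by rewrite cons_uniq bump_notin map_inj_uniq ?iota_uniq //; apply: can_inj (bumpK x).
rewrite mem_iota inE; have [-> | y_x] := eqVneq y x; first lia.
apply/mapP/idP => [[z] | y_range].
  by rewrite mem_iota /bump => z_range ->; case: leqP => /=; lia.
exists (unbump x y); last by rewrite unbumpK // inE y_x.
by move: y_x; rewrite mem_iota /unbump => /eqP; case: ltnP => /=; lia.
Qed.

Lemma count_head_bump (P Q : pred (seq nat)) a k x : a <= x <= a + k ->
  {in permutations (iota a k), forall w, Q (x :: map (bump x) w) = P w} ->
  count P (permutations (iota a k)) =
  count (fun y => Q y && (head 0 y == x)) (permutations (iota a k.+1)).
Proof.
move=> x_range QP; have base := perm_bump_iota x_range.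
apply: (@count_bij _ _ _ _ _ _ (fun w => x :: map (bump x) w)
                             (fun y => map (unbump x) (behead y)));
  rewrite ?permutations_uniq //.
  move=> w w_perm Pw; rewrite /= mapK ?QP ?Pw ?eqxx //; last exact: bumpK.
  rewrite mem_permutations (perm_trans _ base) // perm_cons perm_map //.
  by rewrite -mem_permutations.
case=> [|x' y]; rewrite mem_permutations; first by move/perm_size; rewrite size_iota.
move=> y_perm /andP [Qy /eqP /= x'_x]; subst x'.
have {}y_perm : perm_eq y (map (bump x) (iota a k)).
  by rewrite -(perm_cons x) (perm_trans y_perm) // perm_sym.
have x_notin : x \notin y by rewrite (perm_mem y_perm) bump_notin.
have y_bump : map (bump x) (map (unbump x) y) = y.
  rewrite -map_comp map_id_in // => z z_y; apply: unbumpK.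
  by rewrite inE; apply: contraNneq x_notin => <-.
have w_perm : perm_eq (map (unbump x) y) (iota a k).
  by apply: (perm_map_inj (can_inj (bumpK x))); rewrite y_bump.
by rewrite /= mem_permutations w_perm -QP ?mem_permutations // y_bump.
Qed.

Lemma count_by_head (P : pred (seq nat)) (s : seq (seq nat)) m n :
  {in s, forall w, P w -> m <= head 0 w < n} ->
  count P s = \sum_(m <= x < n) count (fun w => P w && (head 0 w == x)) s.
Proof.
elim: s => [|w s IHs] head_range /=; first by rewrite big1.
rewrite big_split /= -IHs; last by move=> v v_s; apply: head_range; rewrite inE v_s orbT.
congr (_ + _); have := head_range w (mem_head w s).
case: (P w) => /= [/(_ isT) range | _]; last by rewrite big1.
rewrite (eq_bigr (fun x => (x == head 0 w) : nat)) => [|x _]; last by rewrite eq_sym.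
by rewrite -big_mkcond big_nat1_eq range.
Qed.

Lemma head_perm_iota a k w : perm_eq w (iota a k.+1) -> a <= head 0 w < a + k.+1.
Proof.
case: w => [/perm_size | h w /perm_mem h_in]; first by rewrite size_iota.
by rewrite -mem_iota -h_in mem_head.
Qed.

(** * Pattern occurrences *)

Definition same_order (s p : seq nat) : bool :=
  (size s == size p) &&
  all (fun i => all (fun j => (nth 0 s i < nth 0 s j) == (nth 0 p i < nth 0 p j))
                    (iota 0 (size p))) (iota 0 (size p)).

Lemma containsP (w p : seq nat) :
  reflect (exists2 s, subseq s w & same_order s p) (contains w p).
Proof.
have allE s :
    [forall i : 'I_(size p), forall j : 'I_(size p),
      (nth 0 s i < nth 0 s j) == (nth 0 p i < nth 0 p j)] =
    all (fun i => all (fun j => (nth 0 s i < nth 0 s j) == (nth 0 p i < nth 0 p j))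
      (iota 0 (size p))) (iota 0 (size p)).
  apply/forallP/allP => [H i | H i].
    rewrite mem_iota => /andP [_ lt_i]; apply/allP => j; rewrite mem_iota => /andP [_ lt_j].
    exact: (forallP (H (Ordinal lt_i)) (Ordinal lt_j)).
  apply/forallP => j; have := H i; rewrite mem_iota ltn_ord => /(_ isT) /allP.
  by apply; rewrite mem_iota ltn_ord.
apply: (iffP existsP) => [[m /andP [sz ord]] | [s /subseqP [m sz ->] ord]].
  by exists (mask m w); rewrite ?mask_subseq // /same_order sz -allE.
by exists (Tuple (introT eqP sz)); rewrite /= allE.
Qed.

Definition occurs (P : pred (seq nat)) (w : seq nat) := exists2 s, subseq s w & P s.

Lemma avoids2P w p q (P : pred (seq nat)) :
  (forall s, same_order s p || same_order s q = P s) ->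
  reflect (~ occurs P w) (avoids w p && avoids w q).
Proof.
move=> eq_P; rewrite -negb_or; apply: (iffP negP) => [noc [s sub] | noc].
  rewrite -eq_P => /orP [] ord; apply: noc; apply/orP; [left | right];
  by apply/containsP; exists s.
by case/orP => /containsP [s sub ord]; apply: noc; exists s; rewrite // -eq_P ord ?orbT.
Qed.

Definition pat132_213 (s : seq nat) :=
  if s is [:: a; b; c] then (a < c < b) || (b < a < c) else false.

(* [dsum1 P] recognises the direct sums 1 (+) p of the patterns p recognised
   by [P]; 1243 = 1 (+) 132 and 1324 = 1 (+) 213. *)
Definition dsum1 (P : pred (seq nat)) (s : seq nat) :=
  if s is a :: s' then all (fun b => a < b) s' && P s' else false.

Lemma same_order_132_213 s :
  same_order s [:: 1; 3; 2] || same_order s [:: 2; 1; 3] = pat132_213 s.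
Proof.
by case: s => [|a [|b [|c [|d s]]]] //; rewrite /same_order /=; apply/idP/idP; lia.
Qed.

Lemma same_order_1243_1324 s :
  same_order s [:: 1; 2; 4; 3] || same_order s [:: 1; 3; 2; 4] = dsum1 pat132_213 s.
Proof.
by case: s => [|a [|b [|c [|d [|e s]]]]] //; rewrite /same_order /=; apply/idP/idP; lia.
Qed.

Lemma occurs_subseq P w1 w2 : subseq w1 w2 -> occurs P w1 -> occurs P w2.
Proof. by move=> sub12 [s sub Ps]; exists s; first exact: subseq_trans sub12. Qed.

Lemma occurs_cons P x w :
  occurs P (x :: w) -> occurs P w \/ exists2 s, subseq s w & P (x :: s).
Proof.
case=> [[|y s] sub Ps]; first by left; exists [::]; rewrite ?sub0seq.
move: sub Ps => /=; case: eqP => [-> sub Ps | _ sub Ps]; [right | left].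
  by exists s.
by exists (y :: s).
Qed.

Definition order_invariant (P : pred (seq nat)) :=
  forall f, {mono f : a b / a < b} -> forall s, P (map f s) = P s.

Lemma pat132_213_invariant : order_invariant pat132_213.
Proof. by move=> f mono_f [|a [|b [|c [|d s]]]] //=; rewrite !mono_f. Qed.

Lemma dsum1_invariant P : order_invariant P -> order_invariant (dsum1 P).
Proof.
move=> inv_P f mono_f [|a s] //=; rewrite all_map inv_P //.
by congr (_ && _); apply: eq_all => b /=; rewrite mono_f.
Qed.

Lemma occurs_map P f w : order_invariant P -> {mono f : a b / a < b} ->
  occurs P (map f w) <-> occurs P w.
Proof.
move=> inv_P mono_f; split=> [[s /subseqP [m _ ->] Ps] | [s sub Ps]].
  by exists (mask m w); rewrite ?mask_subseq // -(inv_P f) // map_mask.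
by exists (map f s); rewrite ?map_subseq ?inv_P.
Qed.

Lemma occurs_dsum1_cat P x u v : {in u ++ v, forall y, x < y} ->
  occurs (dsum1 P) (u ++ x :: v) <-> occurs (dsum1 P) (u ++ v) \/ occurs P v.
Proof.
move=> x_min; have x_notin : x \notin u ++ v by apply/negP => /x_min; rewrite ltnn.
have x_notin_u : x \notin u by apply: contra x_notin; rewrite mem_cat => ->.
split=> [[s sub Ps] | [occ | [s sub Ps]]].
- have [x_s | x_notin_s] := boolP (x \in s); last first.
    by left; exists s => //; have := subseq_rem x sub; rewrite rem_id // rem_cat_notin.
  case: s x_s sub Ps => [|a s] //= x_as sub /andP [a_min Ps]; right.
  suff a_x : a = x by move: sub; rewrite a_x cons_subseq_cat // => sub; exists s.
  apply/eqP; apply: contraT => a_neq_x.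
  move: x_as; rewrite inE eq_sym (negbTE a_neq_x) /= => /(allP a_min) lt_ax.
  have a_uv : a \in u ++ v.
    by move: (mem_subseq sub (mem_head a s)); rewrite !mem_cat inE (negbTE a_neq_x).
  by have := x_min a a_uv; rewrite ltnNge (ltnW lt_ax).
- by apply: occurs_subseq occ; rewrite cat_subseq ?subseq_cons.
- exists (x :: s); first by rewrite cons_subseq_cat.
  rewrite /= Ps andbT; apply/allP => y /(mem_subseq sub) y_v.
  by apply: x_min; rewrite mem_cat y_v orbT.
Qed.

Lemma occurs_dsum1 P w : occurs (dsum1 P) w -> occurs P w.
Proof. by case=> [[|a s] //= sub /andP [_ Ps]]; exists s; first exact: cons_subseq sub. Qed.

(** * Avoiding {132, 213} and {1243, 1324} *)

Definition av132_213 w := avoids w [:: 1; 3; 2] && avoids w [:: 2; 1; 3].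
Definition av1243_1324 w := avoids w [:: 1; 2; 4; 3] && avoids w [:: 1; 3; 2; 4].

Lemma av132_213P w : reflect (~ occurs pat132_213 w) (av132_213 w).
Proof. exact: avoids2P same_order_132_213. Qed.

Lemma av1243_1324P w : reflect (~ occurs (dsum1 pat132_213) w) (av1243_1324 w).
Proof. exact: avoids2P same_order_1243_1324. Qed.

Lemma av132_213_subseq w1 w2 : subseq w1 w2 -> av132_213 w2 -> av132_213 w1.
Proof. by move=> sub /av132_213P noc; apply/av132_213P => /(occurs_subseq sub). Qed.

Lemma av132_213_map f w :
  {mono f : a b / a < b} -> av132_213 (map f w) = av132_213 w.
Proof.
move=> mono_f; apply/av132_213P/av132_213P; rewrite occurs_map //;
by apply: pat132_213_invariant.
Qed.

Lemma av1243_1324_map f w :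
  {mono f : a b / a < b} -> av1243_1324 (map f w) = av1243_1324 w.
Proof.
move=> mono_f; apply/av1243_1324P/av1243_1324P; rewrite occurs_map //;
by apply/dsum1_invariant/pat132_213_invariant.
Qed.

Lemma av132_213_cons_max x w :
  {in w, forall y, y < x} -> av132_213 (x :: w) = av132_213 w.
Proof.
move=> x_max; apply/av132_213P/av132_213P => noc occ; apply: noc.
  exact: occurs_subseq (subseq_cons w x) occ.
case/occurs_cons: occ => // -[[|b [|c [|? ?]]] //= /mem_subseq sub].
by have := x_max c (sub c (mem_last b [:: c])); lia.
Qed.

Lemma av132_213_cons_succ x w : uniq (x :: x.+1 :: w) ->
  av132_213 (x :: x.+1 :: w) = av132_213 (x.+1 :: w).
Proof.
rewrite /= inE negb_or => /and3P [/andP [_ x_w] x1_w _].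
apply/av132_213P/av132_213P => noc occ; apply: noc.
  exact: occurs_subseq (subseq_cons _ x) occ.
case/occurs_cons: occ => // -[[|b [|c [|? ?]]] //].
rewrite [subseq _ _]/=; case: eqP => [-> _ /= | b_x1 sub Ps]; first lia.
exists [:: x.+1; b; c]; first by rewrite /= eqxx.
have b_w := mem_subseq sub (mem_head b [:: c]).
have c_w := mem_subseq sub (mem_last b [:: c]).
have b_x : b != x by apply: contraNneq x_w => <-.
have c_x : c != x by apply: contraNneq x_w => <-.
have c_x1 : c != x.+1 by apply: contraNneq x1_w => <-.
by move: Ps => /=; lia.
Qed.

Lemma av132_213_next_succ x y w : uniq (x :: y :: w) -> av132_213 (x :: y :: w) ->
  x.+1 \in y :: w -> y = x.+1.
Proof.
rewrite /= inE negb_or => /and3P [/andP [x_y _] _ _] /av132_213P noc.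
rewrite inE => /orP [/eqP -> // | x1_w]; have [// | y_x1] := eqVneq y x.+1.
by case: noc; exists [:: x; y; x.+1]; rewrite /= ?eqxx ?sub1seq //; lia.
Qed.

Lemma av1243_1324_cat_min x u v : {in u ++ v, forall y, x < y} ->
  av1243_1324 (u ++ x :: v) = av1243_1324 (u ++ v) && av132_213 v.
Proof.
move=> x_min; apply/av1243_1324P/andP => [noc | [/av1243_1324P noc1 /av132_213P noc2]].
  split; [apply/av1243_1324P | apply/av132_213P] => occ;
  apply: noc; apply/occurs_dsum1_cat => //; by [left | right].
by case/(occurs_dsum1_cat _ x_min).
Qed.

Lemma av1243_1324_cons_min x w :
  {in w, forall y, x < y} -> av1243_1324 (x :: w) = av132_213 w.
Proof.
move=> x_min; rewrite -[x :: w]cat0s av1243_1324_cat_min // andb_idl //.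
by move=> /av132_213P noc; apply/av1243_1324P => /occurs_dsum1.
Qed.

Lemma av1243_1324_cons_high x w :
  {in w, forall y, y <= x.+2} -> av1243_1324 (x :: w) = av1243_1324 w.
Proof.
move=> x_high; apply/av1243_1324P/av1243_1324P => noc occ; apply: noc.
  exact: occurs_subseq (subseq_cons w x) occ.
case/occurs_cons: occ => // -[[|a [|b [|c [|? ?]]]] /mem_subseq sub]; rewrite /= ?andbF //.
by have := x_high b (sub b _); have := x_high c (sub c _); rewrite !inE !eqxx !orbT; lia.
Qed.

Lemma av1243_1324_two_one u v : {in u ++ v, forall y, 2 < y} ->
  av1243_1324 (2 :: u ++ 1 :: v) = av132_213 (u ++ v).
Proof.
move=> gt2; rewrite -cat_cons av1243_1324_cat_min => [|y]; last first.
  by rewrite /= inE => /orP [/eqP -> // | /gt2 /ltnW].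
rewrite av1243_1324_cons_min // andb_idr //; apply: av132_213_subseq.
exact: suffix_subseq.
Qed.

Lemma av132_213_count_head_max a m :
  count (fun y => av132_213 y && (head 0 y == a + m)) (permutations (iota a m.+1)) =
  count av132_213 (permutations (iota a m)).
Proof.
rewrite -(count_head_bump (P := av132_213)) ?leqnn ?leq_addr // => w.
rewrite mem_permutations => w_perm.
have w_lt y : y \in w -> y < a + m by rewrite (perm_mem w_perm) mem_iota => /andP [].
rewrite (map_id_in (f := bump (a + m))) => [|y /w_lt y_lt]; last by rewrite /bump leqNgt y_lt.
exact: av132_213_cons_max.
Qed.

Lemma av132_213_count_head a m x : a <= x < a + m ->
  count (fun y => av132_213 y && (head 0 y == x)) (permutations (iota a m.+1)) =
  count (fun y => av132_213 y && (head 0 y == x)) (permutations (iota a m)).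
Proof.
move=> x_range.
rewrite -(count_head_bump (P := fun y => av132_213 y && (head 0 y == x))) // => [|w].
  by case/andP: x_range => -> /ltnW.
rewrite mem_permutations => w_perm.
have x_w : x \in w by rewrite (perm_mem w_perm) mem_iota.
have bump_xx : bump x x = x.+1 by rewrite /bump leqnn.
have uniq_x_bump : uniq (x :: map (bump x) w).
  rewrite cons_uniq bump_notin (map_inj_uniq (can_inj (bumpK x))).
  by rewrite (perm_uniq w_perm) iota_uniq.
case: w w_perm x_w uniq_x_bump => [|h w] // w_perm x_w uniq_x_bump.
have [h_x | h_x] := eqVneq h x.
  subst h; rewrite /= bump_xx in uniq_x_bump *.
  rewrite andbT av132_213_cons_succ // -bump_xx -map_cons av132_213_map //.
  exact: ltn_bump2.
rewrite andbF; apply/negP => av; have := av132_213_next_succ uniq_x_bump av.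
rewrite -bump_xx -map_cons map_f // => /(_ isT) /(can_inj (bumpK x)) /eqP.
by rewrite (negbTE h_x).
Qed.

Lemma av132_213_count a m : count av132_213 (permutations (iota a m.+1)) = 2 ^ m.
Proof.
elim: m => [|m IHm].
  rewrite /= addn0; apply/eqP; rewrite eqb1; apply/av132_213P.
  by case=> -[|b [|c [|d s]]] // /size_subseq.
rewrite (@count_by_head _ _ a (a + m.+2)); last first.
  by move=> w; rewrite mem_permutations => /head_perm_iota.
rewrite addnS big_nat_recr ?leq_addr // av132_213_count_head_max.
under eq_big_nat => x x_range do rewrite av132_213_count_head //.
rewrite -count_by_head => [|w]; last by rewrite mem_permutations => /head_perm_iota.
by rewrite IHm expnS mul2n -addnn.
Qed.

(** * The numbers t(n, l) *)

Definition tword n w := av1243_1324 w && (index n w == (index 1 w).+1).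

Lemma oneline_inj n : injective (@oneline n).
Proof.
move=> s s' eq_s; apply/permP => i; apply/val_inj.
by move/eq_in_map: eq_s => /(_ i (mem_enum _ i)) [].
Qed.

Lemma oneline_perm n (s : {perm 'I_n}) : perm_eq (oneline s) (iota 1 n).
Proof.
apply: uniq_perm; rewrite ?iota_uniq //.
  by rewrite map_inj_uniq ?enum_uniq // => i j [] /val_inj; apply: perm_inj.
move=> v; rewrite mem_iota; apply/mapP/idP => [[i _ ->] | v_range].
  by have := ltn_ord (s i); lia.
have v_lt : v.-1 < n by lia.
by exists ((s^-1)%g (Ordinal v_lt)); rewrite ?mem_enum // permKV /=; lia.
Qed.

Lemma perm_oneline_enum n :
  perm_eq (map (@oneline n) (enum {perm 'I_n})) (permutations (iota 1 n)).
Proof.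
have uniq_lines : uniq (map (@oneline n) (enum {perm 'I_n})).
  by rewrite map_inj_uniq ?enum_uniq //; apply: oneline_inj.
have lines_sub : {subset map (@oneline n) (enum {perm 'I_n}) <= permutations (iota 1 n)}.
  by move=> w /mapP [s _ ->]; rewrite mem_permutations oneline_perm.
have size_le : size (permutations (iota 1 n)) <= size (map (@oneline n) (enum {perm 'I_n})).
  by rewrite size_permutations ?iota_uniq // size_map -cardE card_Sn size_iota.
apply: uniq_perm; rewrite ?permutations_uniq //.
by case: (uniq_min_size uniq_lines lines_sub size_le).
Qed.

Lemma t_count n l : t n l =
  count (fun w => tword n w && (head 0 w == l)) (permutations (iota 1 n)).
Proof.
rewrite /t cardE /enum_mem size_filter -enumT.
rewrite -(seq.permP (perm_oneline_enum n)) !count_map.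
by apply: eq_count => s; rewrite /= inE.
Qed.

Lemma t_1 k : t k.+3 1 = 2 ^ k.
Proof.
rewrite t_count.
rewrite -(count_head_bump (P := fun w => av132_213 w && (head 0 w == 1 + k.+1))) //.
  by rewrite av132_213_count_head_max av132_213_count.
move=> w; rewrite mem_permutations => w_perm.
have w_pos y : y \in w -> 0 < y by rewrite (perm_mem w_perm) mem_iota => /andP [].
rewrite /tword av1243_1324_cons_min => [|z /mapP [y /w_pos y_pos ->]]; last first.
  by rewrite /bump y_pos.
rewrite (av132_213_map _ (ltn_bump2 1)) /=; congr (_ && _).
case: w w_perm w_pos => [/perm_size // | h w _ w_pos] /=.
have h_pos := w_pos h (mem_head h w).
by rewrite /bump h_pos /= !add1n !eqSS; case: (h == k.+2).
Qed.

Lemma tword_two_one n u v : {in u ++ n :: v, forall y, 2 < y} -> n \notin u ->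
  tword n (2 :: u ++ 1 :: n :: v) = av132_213 (u ++ n :: v).
Proof.
move=> gt2 n_u; have n_gt2 : 2 < n by apply: gt2; rewrite mem_cat mem_head orbT.
have one_u : 1 \notin u.
  by apply/negP => one_u; have := gt2 1; rewrite mem_cat one_u => /(_ isT).
rewrite /tword av1243_1324_two_one // -cat_cons index_cat_adjacent ?eqxx ?andbT //.
by rewrite !inE (negbTE n_u) (gtn_eqF n_gt2) (gtn_eqF (ltnW n_gt2)).
Qed.

Lemma perm_eql_two_one (u v : seq nat) :
  perm_eql (2 :: u ++ 1 :: v) (1 :: 2 :: u ++ v).
Proof.
apply/permPl; apply: (@perm_trans _ (2 :: 1 :: u ++ v)).
  by rewrite perm_cons -[1 :: v]cat1s perm_catCA.
exact/permPl/(perm_catCA [:: 2] [:: 1]).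
Qed.

Lemma t_2 k : t k.+3 2 = 2 ^ k.
Proof.
have perm_iota u v :
    perm_eq (2 :: u ++ 1 :: v) (iota 1 k.+3) = perm_eq (u ++ v) (iota 3 k.+1).
  by rewrite perm_eql_two_one /= !perm_cons.
have gt2 w : perm_eq w (iota 3 k.+1) -> {in w, forall y, 2 < y}.
  by move=> w_perm y; rewrite (perm_mem w_perm) mem_iota => /andP [].
rewrite t_count -(av132_213_count 3 k); apply/esym.
apply: (@count_bij _ _ _ _ _ _ (fun w => 2 :: ins_before k.+3 1 w)
                             (fun y => rem 1 (behead y))); rewrite ?permutations_uniq //.
  move=> w; rewrite mem_permutations => w_perm av_w.
  have n_w : k.+3 \in w by rewrite (perm_mem w_perm) mem_iota; lia.
  have uniq_w : uniq w by rewrite (perm_uniq w_perm) iota_uniq.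
  case/splitPr: n_w w_perm av_w uniq_w => u v w_perm av_w.
  rewrite cat_uniq => /and3P [_ /hasPn /(_ _ (mem_head _ v)) n_u _].
  have one_u : 1 \notin u.
    by apply/negP => one_u; have := gt2 _ w_perm 1; rewrite mem_cat one_u => /(_ isT).
  rewrite ins_before_cat // rem_cat_notin // mem_permutations perm_iota w_perm.
  by rewrite tword_two_one ?av_w // => y; apply: gt2.
case=> [|h y]; rewrite mem_permutations; first by move/perm_size.
move=> y_perm /andP [tw /eqP /= h2]; subst h.
have n_y : k.+3 \in y.
  by have := perm_mem y_perm k.+3; rewrite mem_iota inE /= => ->; lia.
have idx : index k.+3 y = (index 1 y).+1 by case/andP: (tw) => _ /eqP [].
have [u [v [y_eq one_u n_u]]] := index_succ_cat n_y idx; subst y.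
have uv_perm : perm_eq (u ++ k.+3 :: v) (iota 3 k.+1) by rewrite -perm_iota.
rewrite /= rem_cat_notin // ins_before_cat // mem_permutations uv_perm.
by rewrite -tword_two_one // => z; apply: gt2.
Qed.

Lemma t_high_head k x : 2 <= x <= k -> k <= x.+1 ->
  t k.+1 x = count (tword k) (permutations (iota 1 k)).
Proof.
case/andP=> x_gt1 x_le_k k_le.
rewrite t_count -(count_head_bump (P := tword k)) // => [|w].
  by rewrite (ltnW x_gt1) (leq_trans x_le_k) ?leq_addl.
rewrite mem_permutations => w_perm.
have w_range y : y \in w -> 0 < y <= k by rewrite (perm_mem w_perm) mem_iota add1n.
have bump1 : bump x 1 = 1 by rewrite /bump leqNgt x_gt1.
have bumpk : bump x k = k.+1 by rewrite /bump x_le_k.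
rewrite /tword av1243_1324_cons_high => [|z /mapP [y /w_range y_range ->]]; last first.
  by rewrite /bump; case: leqP => /=; lia.
rewrite (av1243_1324_map _ (ltn_bump2 x)) /= (ltn_eqF (x_le_k : x < k.+1)) (gtn_eqF x_gt1).
by rewrite -{1}bumpk -{1}bump1 !(index_map (can_inj (bumpK x))).
Qed.

Lemma sum_t k : \sum_(1 <= l < k) t k l = count (tword k) (permutations (iota 1 k)).
Proof.
rewrite (count_by_head (m := 1) (n := k)) => [|w].
  by apply: eq_bigr => l _; rewrite t_count.
rewrite mem_permutations; case: w => [|h w] w_perm /andP [_ idx] //.
have := perm_mem w_perm h; rewrite mem_head mem_iota add1n ltnS => /esym /andP [h_pos h_le].
rewrite /= h_pos ltn_neqAle h_le andbT; apply: contraTneq idx => ->.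
by rewrite /= eqxx.
Qed.

Theorem lemma5p4 (n : nat) : 3 <= n ->
  (t n 1 = 2 ^ (n - 3) /\ t n 2 = 2 ^ (n - 3)) /\
  (t n (n - 2) = \sum_(1 <= l < n - 1) t n.-1 l /\
   t n (n - 1) = \sum_(1 <= l < n - 1) t n.-1 l).
Proof.
move=> n_ge3; have [k ->] : exists k, n = k.+3 by exists (n - 3); lia.
rewrite !subSS !subn0 sum_t t_1 t_2 -(t_high_head (x := k.+2)) ?leqnn //.
split=> //; split=> //.
case: k => [|k]; first by rewrite t_1 t_2.
by rewrite !t_high_head //; lia.
Qed.
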